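(* Let $\theta$ be a finite rooted tree with $n\ge1$ nodes, in which every node $v$ carries a type $\eta_v\in\{0,1,2,3\}$, subject to the constraint: no node of type $0$ or $1$ has exactly one child (immediately preceding node) with that child being of type $0$ or $1$. Let $N_i^1(\theta)$ be the number of internal nodes (nodes with at least one child) of type $1$ in $\theta$. Then $N_i^1(\theta)\le \frac{2n-1}{3}$.
   Context: In a rooted tree, the children of a node $v$ are the nodes immediately preceding $v$ (i.e. whose outgoing line enters $v$); end-nodes are nodes with no children and internal nodes are the others. All nodes, including the root node, are counted in $n$. *)

From mathcomp Require Import all_boot.
Set Implicit Arguments. Unset Strict Implicit. Unset Printing Implicit Defensive.

(* A finite rooted tree whose nodes carry a type in {0,1,2,3}.
   [Node eta ts] is a node of type [eta] whose children (the nodes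
   immediately preceding it) are the roots of the subtrees [ts]. *)
Inductive ttree : Type := Node of 'I_4 & seq ttree.

Definition ttype (t : ttree) : 'I_4 := let: Node e _ := t in e.
Definition children (t : ttree) : seq ttree := let: Node _ ts := t in ts.

Fixpoint nnodes (t : ttree) : nat :=
  let: Node _ ts := t in (sumn (map nnodes ts)).+1.

Fixpoint N_int1 (t : ttree) : nat :=
  let: Node e ts := t in
  ((size ts != 0) && (val e == 1)) + sumn (map N_int1 ts).

Definition type01 (e : 'I_4) : bool := val e <= 1.

Definition node_ok (e : 'I_4) (ts : seq ttree) : bool :=
  ~~ [&& type01 e, size ts == 1 & all (fun c => type01 (ttype c)) ts].

Fixpoint admissible (t : ttree) : bool :=
  let: Node e ts := t in node_ok e ts && all admissible ts.

(** Induction on the tree gives the stronger bound [3 N + 1 + [type >= 2] <= 2 n]. Each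
    child contributes at least one unit of slack [2 n_c - 3 N_c], which pays for
    the parent; the only parent that needs more than the unit it receives is an
    internal node of type 1 with a single child, and the constraint forces that
    child to have type 2 or 3, hence to carry the extra unit. *)
From mathcomp Require Import all_boot.
From mathcomp Require Import zify.

Set Implicit Arguments.
Unset Strict Implicit.
Unset Printing Implicit Defensive.

Lemma ttree_ind_In (P : ttree -> Prop) :
  (forall e ts, (forall c, List.In c ts -> P c) -> P (Node e ts)) ->
  forall t, P t.
Proof.
move=> IH; fix loop 1 => -[e ts]; apply: IH.
(* No [//] below: [done] would close goals by an unguarded call to [loop]. *)
move: ts; fix loop_in 1 => -[|d ts] c /=; first by case.
case=> [<- | /loop_in Pc]; [exact: loop | exact: Pc].
Qed.

Lemma all_In (T : Type) (p : pred T) (s : seq T) x :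
  all p s -> List.In x s -> p x.
Proof. by elim: s => [|y s IHs] //= /andP[py ps] [<- | /IHs->]. Qed.

Lemma sumn_map_ltn (T : Type) (a b : nat) (f g : T -> nat) (s : seq T) :
  (forall x, List.In x s -> a * f x < b * g x) ->
  a * sumn (map f s) + size s <= b * sumn (map g s).
Proof.
elim: s => [|x s IHs] /= lt_fg; first by rewrite !muln0.
have := lt_fg x (or_introl erefl).
have := IHs (fun y sy => lt_fg y (or_intror sy)).
lia.
Qed.

Definition potential_bound (t : ttree) : bool :=
  3 * N_int1 t + 1 + ~~ type01 (ttype t) <= 2 * nnodes t.

Lemma potential_bound_Node e ts :
  node_ok e ts -> (forall c, List.In c ts -> potential_bound c) ->
  potential_bound (Node e ts).
Proof.
rewrite /potential_bound /= => ok_ets bound_ts.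
have children : 3 * sumn (map N_int1 ts) + size ts <= 2 * sumn (map nnodes ts).
  apply: sumn_map_ltn => c /bound_ts; lia.
case: ts ok_ets bound_ts children => [|c [|d ts]] ok_ets bound_ts children.
- by case: e {ok_ets} => -[|[|[]]].
- have := bound_ts c (or_introl erefl); move: ok_ets.
  rewrite /node_ok /= andbT.
  by case: e => -[|[|[|[]]]] //= _; case: (type01 _); lia.
- move: children => /=.
  by case: e {ok_ets} => -[|[|[|[]]]] //= _; lia.
Qed.

Lemma admissible_potential_bound t : admissible t -> potential_bound t.
Proof.
elim/ttree_ind_In: t => e ts IHts /= /andP[ok_ets adm_ts].
apply: potential_bound_Node => // c tc.
exact: IHts c tc (all_In adm_ts tc).
Qed.

Theorem lemma2p1 (theta : ttree) :
  admissible theta -> 3 * N_int1 theta <= 2 * nnodes theta - 1.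
Proof. move=> /admissible_potential_bound; rewrite /potential_bound; lia. Qed.
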